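(* Let $K\ge 1$, $\alpha\in(0,1)$, and let $D=(D_1,\dots,D_K):[0,1]^K\to\{0,1\}^K$ be a testing policy that is monotone and satisfies $$\int_{[0,1]^{|\mathcal I|}}\max_{k\in\mathcal I}D_k(\mathbf p^0_{\mathcal I})\,d\mathbf p_{\mathcal I}\le\alpha\quad\text{for all }\mathcal I\subseteq[K].$$ For each nonempty $\mathcal I\subseteq[K]$ define the local test $\phi_{\mathcal I}(\mathbf p)=\max_{k\in\mathcal I}D_k(\mathbf p^0_{\mathcal I})$, and let $\bar\phi_{\{k\}}(\mathbf p)=\prod_{\mathcal I\subseteq[K],\,\mathcal I\ni k}\phi_{\mathcal I}(\mathbf p)$ be the individual rejection decisions of the closed testing procedure with these local tests. Then $\bar\phi_{\{k\}}(\mathbf p)\ge D_k(\mathbf p)$ for all $k\in[K]$ and all $\mathbf p\in[0,1]^K$.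
   Context: $[K]=\{1,\dots,K\}$. $D$ is monotone if $\mathbf p'\preceq\mathbf p$ (coordinatewise $p'_k\le p_k$) implies $D_k(\mathbf p')\ge D_k(\mathbf p)$ for all $k$. For $\mathcal I=\{j_1,\dots,j_{|\mathcal I|}\}\subseteq[K]$, the projected vector $\mathbf p^0_{\mathcal I}\in[0,1]^K$ has $k$-th coordinate $p_k$ if $k\in\mathcal I$ and $0$ otherwise; $\mathbf p_{\mathcal I}=(p_{j_1},\dots,p_{j_{|\mathcal I|}})$ and the integral is Lebesgue integration over these coordinates. *)

From HB Require Import structures.
From mathcomp Require Import all_boot all_order all_algebra.
From mathcomp Require Import all_classical all_reals all_analysis.
Set Implicit Arguments. Unset Strict Implicit. Unset Printing Implicit Defensive.
Import Order.TTheory GRing.Theory Num.Theory.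
Local Open Scope ring_scope.

Section Defs.
Variables (R : realType) (K : nat).

Definition in_unit_cube (p : 'I_K -> R) : Prop := forall k, 0 <= p k <= 1.

Definition monotone_policy (D : ('I_K -> R) -> 'I_K -> bool) : Prop :=
  forall p p' : 'I_K -> R, in_unit_cube p -> in_unit_cube p' ->
    (forall k, p' k <= p k) -> forall k, ((D p k)%:R <= (D p' k)%:R :> R).

Definition proj0 (I : {set 'I_K}) (p : 'I_K -> R) : 'I_K -> R :=
  fun k => if k \in I then p k else 0.

Definition upd (p : 'I_K -> R) (j : 'I_K) (x : R) : 'I_K -> R :=
  fun i => if i == j then x else p i.

Fixpoint iter_int (s : seq 'I_K) (f : ('I_K -> R) -> \bar R) (p : 'I_K -> R)
  : \bar R :=
  match s with
  | [::] => f p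
  | j :: s' =>
      (\int[@lebesgue_measure R]_(x in `[0%R, 1%R]) iter_int s' f (upd p j x))%E
  end.

(** integral over [0,1]^{|I|} of g(p_I) (coordinates outside I set to 0) *)
Definition cube_integral (I : {set 'I_K}) (f : ('I_K -> R) -> \bar R) : \bar R :=
  iter_int (enum I) f (fun _ => 0).

Definition local_test (D : ('I_K -> R) -> 'I_K -> bool) (I : {set 'I_K})
  (p : 'I_K -> R) : R :=
  \big[Num.max/0]_(k in I) (D (proj0 I p) k)%:R.

Definition closed_decision (D : ('I_K -> R) -> 'I_K -> bool) (k : 'I_K)
  (p : 'I_K -> R) : R :=
  \prod_(I : {set 'I_K} | k \in I) local_test D I p.

End Defs.

From HB Require Import structures.
From mathcomp Require Import all_boot all_order all_algebra.
From mathcomp Require Import all_classical all_reals all_analysis.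
Import Order.TTheory GRing.Theory Num.Theory.
Local Open Scope ring_scope.

(* Projecting p onto I only lowers coordinates of a vector of [0,1]^K, so by
   monotonicity D_k(p^0_I) >= D_k(p); for k in I this bounds the local test
   phi_I(p) from below by D_k(p).  Every factor of the closed testing product
   over I containing k is therefore at least D_k(p) and nonnegative, hence so is
   the product. *)

Lemma ler_b2r_prod (R : realDomainType) (I : finType) (P : pred I)
    (F : I -> R) (b : bool) :
  (forall i, P i -> b%:R <= F i) -> (forall i, P i -> 0 <= F i) ->
  b%:R <= \prod_(i | P i) F i.
Proof.
case: b => /= [ge1F _ | _]; last exact: prodr_ge0.
by apply: (big_ind (fun x => 1 <= x)) => // x y; apply: mulr_ege1.
Qed.

Section ClosedTesting.
Variables (R : realType) (K : nat).
Implicit Types (p : 'I_K -> R) (I : {set 'I_K}).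

Lemma proj0_in_unit_cube I p : in_unit_cube p -> in_unit_cube (proj0 I p).
Proof. by move=> p01 i; rewrite /proj0; case: (i \in I); rewrite ?lexx ?ler01. Qed.

Lemma proj0_le I p : in_unit_cube p -> forall i, proj0 I p i <= p i.
Proof. by move=> p01 i; rewrite /proj0; case: (i \in I) => //; case/andP: (p01 i). Qed.

Variable D : ('I_K -> R) -> 'I_K -> bool.

Lemma local_test_ge0 I p : 0 <= local_test D I p.
Proof. exact: bigmax_ge_id. Qed.

Lemma policy_le_local_test I k p : monotone_policy D -> in_unit_cube p ->
  k \in I -> (D p k)%:R <= local_test D I p.
Proof.
move=> mono p01 kI; apply: (bigmax_sup k) => //.
exact: mono p _ p01 (proj0_in_unit_cube I p p01) (proj0_le I p p01) k.
Qed.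

End ClosedTesting.

Theorem proposition2p2 (R : realType) (K : nat) (hK : (1 <= K)%N)
  (alpha : R) (halpha : 0 < alpha < 1)
  (D : ('I_K -> R) -> 'I_K -> bool)
  (hmono : monotone_policy D)
  (hlevel : forall I : {set 'I_K},
     (cube_integral I (fun p => (local_test D I p)%:E) <= alpha%:E)%E) :
  forall (k : 'I_K) (p : 'I_K -> R), in_unit_cube p ->
    (D p k)%:R <= closed_decision D k p.
Proof.
move=> k p p01; apply: ler_b2r_prod => I kI.
- exact: policy_le_local_test.
- exact: local_test_ge0.
Qed.
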